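(* Fix a strategy $\mathcal{G}$ for the partial feedback game and let $H$ be the random complete history when $\pi\sim\mathcal{S}_{m,n}$ is uniform. Let $0<\varepsilon\le \frac14$. For any card type $i$, if $n$ is sufficiently large in terms of $\varepsilon$ and $m$, then \[\Pr\Big[Y_i(H) > (1+4\varepsilon)\frac{b_i(H)}{n} + \varepsilon^2 m\Big] \le c' \varepsilon^{-2} e^{-c \varepsilon^4 m}\] for some constants $c,c'>0$ depending only on $\varepsilon$.
   Context: $\mathcal{S}_{m,n}$ is the set of words over $[n]$ in which each symbol appears exactly $m$ times (a deck of $mn$ cards). In the partial feedback game the guesser makes guesses $g_1,\dots,g_{mn}\in[n]$ sequentially; after guess $g_t$ they learn only $y_t\in\{0,1\}$, where $y_t=1$ iff $\pi_t=g_t$. A strategy chooses $g_t$ as a function of $(g_1,\dots,g_{t-1},y_1,\dots,y_{t-1})$. A history up to time $s$ is $h_s=((g_r)_{r\le s},(y_r)_{r\le s})$, $H_s$ is the random history up to time $s$, and $H=H_{mn}$. For a history $h_s$, $a_i(h_s)=|\{r\le s:g_r=i\}|$. The $t$-th guess, with $g_t=i$, is called critical if $\varepsilon mn\le a_i(H_{t-1})<(1-\varepsilon)mn$. $b_i(H)$ is the number of critical guesses with $g_t=i$, and $Y_i(H)$ is the number of those that are correct. *)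

From HB Require Import structures.
From mathcomp Require Import all_boot all_order all_algebra.
From mathcomp Require Import all_classical all_reals all_analysis.
Set Implicit Arguments. Unset Strict Implicit. Unset Printing Implicit Defensive.
Import Order.TTheory GRing.Theory Num.Theory.
Local Open Scope ring_scope.

(* A (deterministic) strategy: the next guess as a function of the history so
   far, a history being the sequence of pairs (g_r, y_r) for r < t. *)
Definition strategy (T : Type) := seq (T * bool) -> T.

Fixpoint play_aux (T : eqType) (strat : strategy T) (h : seq (T * bool))
    (w : seq T) : seq (T * bool) :=
  match w with
  | [::] => h
  | c :: w' => let g := strat h in play_aux strat (rcons h (g, g == c)) w'
  end.

Definition history (T : eqType) (strat : strategy T) (w : seq T) :=
  play_aux strat [::] w.

Definition a_count (T : eqType) (i : T) (h : seq (T * bool)) : nat :=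
  count (fun p => p.1 == i) h.

(* The t-th guess (0-indexed, t-th entry of H) with guess i is critical iff
   eps*m*n <= a_i(H_{t-1}) < (1-eps)*m*n, where H_{t-1} = take t H. *)
Definition is_critical (R : realType) (eps : R) (m n : nat) (T : eqType)
    (i : T) (H : seq (T * bool)) (t : nat) : bool :=
  let a : R := (a_count i (take t H))%:R in
  (eps * (m * n)%:R <= a) && (a < (1 - eps) * (m * n)%:R).

Definition b_count (R : realType) (eps : R) (m n : nat) (T : eqType)
    (i : T) (H : seq (T * bool)) : nat :=
  count (fun tp : nat * (T * bool) =>
           (tp.2.1 == i) && is_critical eps m n i H tp.1)
        (zip (iota 0 (size H)) H).

Definition Y_count (R : realType) (eps : R) (m n : nat) (T : eqType)
    (i : T) (H : seq (T * bool)) : nat :=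
  count (fun tp : nat * (T * bool) =>
           [&& tp.2.1 == i, tp.2.2 & is_critical eps m n i H tp.1])
        (zip (iota 0 (size H)) H).

(* S_{m,n}: words of length mn over [n] = 'I_n with each symbol exactly m times. *)
Definition deck (m n : nat) : {set (m * n).-tuple 'I_n} :=
  [set w : (m * n).-tuple 'I_n | [forall j : 'I_n, count_mem j w == m]].

Definition prob_deck (R : realType) (m n : nat)
    (E : pred ((m * n).-tuple 'I_n)) : R :=
  #|[set w in deck m n | E w]|%:R / #|deck m n|%:R.

From HB Require Import structures.
From mathcomp Require Import all_boot all_order all_algebra.
From mathcomp Require Import all_classical all_reals all_analysis.
From mathcomp Require Import ring lra zify.
Set Implicit Arguments. Unset Strict Implicit. Unset Printing Implicit Defensive.
Import Order.TTheory GRing.Theory Num.Theory.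
Local Open Scope ring_scope.

(* Deal the deck one card at a time and let p_t = (#i's left) / (#cards left)
   be the conditional probability that the t-th card is an i.  For any
   predictable selection of times (here: the critical guesses of i), the hits
   N and the compensator A = sum of the selected p_t make
   exp(theta N - (e^theta - 1) A) a supermartingale, so N exceeds A by
   eps^2 m only with probability e^(-c eps^3 m).  The compensator is at most
   (1 + 2 eps)/n per selected time while more than K n cards remain
   (K ~ eps^2 m / 16), unless for some k >= K the last (k + 1) n cards hold
   more than (1 + 2 eps) k copies of i; the latter events, and a large
   compensator over the last K n cards, are exponentially unlikely by two
   more exponential moment bounds.  Every exponential moment is bounded
   by dynamic programming over the multiset of undealt cards. *)

Lemma mul1D_expRN_le1 (R : realType) (x : R) : (1 + x) * expR (- x) <= 1.
Proof.
by rewrite -[X in _ <= X](expRxMexpNx_1 x) ler_wpM2r ?expR_ge0 ?expR_ge1Dx.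
Qed.

Lemma exprB_ge (R : realFieldType) (b d : R) k : 0 <= d -> d <= b ->
  b ^+ k.+1 - k.+1%:R * d * b ^+ k <= (b - d) ^+ k.+1.
Proof.
move=> d_ge0 d_le_b; have b_ge0 := le_trans d_ge0 d_le_b.
have bd_ge0 : 0 <= b - d by rewrite subr_ge0.
elim: k => [|k IH]; first by rewrite expr1 expr0 mulr1 mul1r.
rewrite [X in _ <= X]exprS; apply: le_trans (ler_wpM2l bd_ge0 IH); rewrite -subr_ge0.
have -> : (b - d) * (b ^+ k.+1 - k.+1%:R * d * b ^+ k) - (b ^+ k.+2 - k.+2%:R * d * b ^+ k.+1)
    = k.+1%:R * (d * d) * b ^+ k by rewrite !exprS [k.+2%:R]mulrS; ring.
by rewrite !mulr_ge0 ?ler0n ?exprn_ge0.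
Qed.

Lemma expR_half_sub1_le (R : realType) (e : R) : 0 <= e -> e <= 1 ->
  expR (e / 2) - 1 <= e / 2 * (1 + e).
Proof.
move=> e_ge0 e_le1; have := mul1D_expRN_le1 (- (e / 2)); rewrite opprK.
have := expR_ge0 (e / 2); nra.
Qed.

Lemma mul_expRN_le (R : realType) (a x : R) : 0 < a ->
  x * expR (- (a * x)) <= 2 / a * expR (- (a * x / 2)).
Proof.
move=> a_gt0; have := mul1D_expRN_le1 (a * x / 2); have := expR_ge0 (- (a * x / 2)).
have -> : expR (- (a * x)) = expR (- (a * x / 2)) * expR (- (a * x / 2)).
  by rewrite -expRD -opprD -splitr.
set E := expR _ => E_ge0 E_le; rewrite mulrA ler_wpM2r // -[X in _ <= X]mulr1.
have -> : x * E = 2 / a * (a * x / 2 * E) by field; rewrite gt_eqF.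
by rewrite ler_pM2l ?divr_gt0 //; lra.
Qed.

Lemma big_tuple_cons (V : Type) (idx : V) (op : Monoid.com_law idx)
    (T : finType) L (G : L.+1.-tuple T -> V) :
  \big[op/idx]_(w : L.+1.-tuple T) G w =
  \big[op/idx]_(c : T) \big[op/idx]_(w : L.-tuple T) G [tuple of c :: w].
Proof.
rewrite pair_big (reindex (fun p : T * L.-tuple T => [tuple of p.1 :: p.2])) /=.
  by apply: eq_bigr => -[c w].
exists (fun w : L.+1.-tuple T => (thead w, [tuple of behead w])) => [[c w] _|w _].
  by rewrite /= theadE; congr pair; apply: val_inj.
by rewrite /= -tuple_eta.
Qed.

Section Arrangements.
Variable n : nat.
Implicit Types (cnt : 'I_n -> nat) (c : 'I_n).

Definition arrangements L cnt : {set L.-tuple 'I_n} :=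
  [set w : L.-tuple 'I_n | [forall j, count_mem j w == cnt j]].

Definition cnt_del cnt c j := (cnt j - (c == j))%N.

Lemma cnt_del_neq cnt c j : c != j -> cnt_del cnt c j = cnt j.
Proof. by rewrite /cnt_del => /negbTE ->; rewrite subn0. Qed.

Lemma arrangements_cons L cnt c (w : L.-tuple 'I_n) :
  ([tuple of c :: w] \in arrangements L.+1 cnt) =
  (0 < cnt c)%N && (w \in arrangements L (cnt_del cnt c)).
Proof.
rewrite !inE; apply/forallP/andP => [Hw|[cnt_c /forallP Hw] j].
  split; first by have /eqP/= <- := Hw c; rewrite eqxx.
  by apply/forallP => j; rewrite /cnt_del -(eqP (Hw j)) /= addKn.
rewrite /= (eqP (Hw j)) /cnt_del subnKC //.
by case: eqP => // <-.
Qed.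

Lemma big_arrangements_cons (V : Type) (idx : V) (op : Monoid.com_law idx)
    L cnt (G : L.+1.-tuple 'I_n -> V) :
  \big[op/idx]_(w in arrangements L.+1 cnt) G w =
  \big[op/idx]_(c | (0 < cnt c)%N)
     \big[op/idx]_(w in arrangements L (cnt_del cnt c)) G [tuple of c :: w].
Proof.
rewrite big_mkcond big_tuple_cons [RHS]big_mkcond; apply: eq_bigr => c _.
case: ifP => cnt_c; first by rewrite [RHS]big_mkcond; apply: eq_bigr => w _;
  rewrite arrangements_cons cnt_c.
by rewrite big1 // => w _; rewrite arrangements_cons cnt_c.
Qed.

Lemma sum_cnt_del cnt c : (0 < cnt c)%N ->
  (\sum_j cnt_del cnt c j = (\sum_j cnt j).-1)%N.
Proof.
move=> cnt_c; rewrite (bigD1 c) //= [in RHS](bigD1 c) //=.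
rewrite (eq_bigr cnt) => [|j]; last by rewrite eq_sym => /cnt_del_neq.
by rewrite /cnt_del eqxx; lia.
Qed.

Lemma prod_fact_cnt_del cnt c : (0 < cnt c)%N ->
  (\prod_j (cnt j)`! = cnt c * \prod_j (cnt_del cnt c j)`!)%N.
Proof.
move=> cnt_c; rewrite (bigD1 c) // [in RHS](bigD1 c) //= mulnA; congr (_ * _)%N.
  by rewrite /cnt_del eqxx subn1; case: (cnt c) cnt_c.
by apply: eq_bigr => j; rewrite eq_sym => /cnt_del_neq ->.
Qed.

Lemma card_arrangements L cnt : (\sum_j cnt j)%N = L ->
  (#|arrangements L cnt| * \prod_j (cnt j)`! = L`!)%N.
Proof.
elim: L cnt => [|L IH] cnt sum_cnt.
  have cnt0 j : cnt j = 0%N by apply/eqP; rewrite -leqn0 -sum_cnt (bigD1 j) ?leq_addr.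
  have -> : arrangements 0 cnt = [set: 0.-tuple _].
    by apply/setP => w; rewrite !inE; apply/forallP => j; rewrite tuple0 cnt0.
  by rewrite cardsT card_tuple big1 // => j _; rewrite cnt0.
rewrite -sum1_card (big_arrangements_cons _ _ (fun _ => 1%N)) big_distrl /=.
rewrite (eq_bigr (fun c => cnt c * L`!)%N) => [|c cnt_c]; last first.
  rewrite sum1_card (prod_fact_cnt_del cnt_c) mulnCA IH //.
  by rewrite sum_cnt_del // sum_cnt.
rewrite -big_distrl /= factS -sum_cnt [in RHS](bigID (fun c => 0 < cnt c)%N) /=.
by rewrite [X in (_ + X)%N]big1 ?addn0 // => j; rewrite lt0n negbK => /eqP.
Qed.

Lemma card_arrangements_del L cnt c :
  (\sum_j cnt j)%N = L.+1 -> (0 < cnt c)%N ->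
  (#|arrangements L (cnt_del cnt c)| * L.+1 = cnt c * #|arrangements L.+1 cnt|)%N.
Proof.
move=> sum_cnt cnt_c.
have prod_gt0 : (0 < \prod_j (cnt_del cnt c j)`!)%N.
  by rewrite prodn_gt0 // => j; rewrite fact_gt0.
have := card_arrangements sum_cnt; rewrite (prod_fact_cnt_del cnt_c) => card_cnt.
have := card_arrangements (etrans (sum_cnt_del cnt_c) (congr1 predn sum_cnt)).
move=> card_del; apply/eqP; rewrite -(eqn_pmul2r prod_gt0) mulnAC card_del.
by rewrite [(cnt c * _)%N]mulnC -mulnA card_cnt factS mulnC.
Qed.

End Arrangements.

Section ExponentialMoments.
Variables (R : realType) (n : nat) (i : 'I_n).

Definition sum_along (f : seq 'I_n -> bool -> R) (pre w : seq 'I_n) : R :=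
  \sum_(t < size w) f (pre ++ take t w) (nth i w t == i).

Lemma sum_along_cons f pre c w :
  sum_along f pre (c :: w) = f pre (c == i) + sum_along f (rcons pre c) w.
Proof.
rewrite /sum_along big_ord_recl /= cats0; congr (_ + _).
by apply: eq_bigr => t _; rewrite cat_rcons.
Qed.

Lemma sum_alongB f g pre w :
  sum_along (fun p b => f p b - g p b) pre w = sum_along f pre w - sum_along g pre w.
Proof. by rewrite /sum_along -sumrB. Qed.

Lemma sum_alongZ a f pre w :
  sum_along (fun p b => a * f p b) pre w = a * sum_along f pre w.
Proof. by rewrite /sum_along mulr_sumr. Qed.

Lemma sum_along_window_count T pre w :
  sum_along (fun p b => (T <= size p)%N%:R * b%:R) pre w
    = (count_mem i (drop (T - size pre) w))%:R.
Proof.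
elim: w pre => [|c w IH] pre; first by rewrite /sum_along big_ord0; case: (T - _)%N.
rewrite sum_along_cons IH size_rcons; case: leqP => [T_le|T_gt].
  have [-> ->] : (T - size pre = 0 /\ T - (size pre).+1 = 0)%N by lia.
  by rewrite !drop0 mul1r natrD.
have -> : (T - size pre = (T - (size pre).+1).+1)%N by lia.
by rewrite mul0r add0r.
Qed.

(* [V r Rr] bounds the conditional expectation of the remaining factor of
   [expR (sum_along f _ _)] when [r] of the [Rr] undealt cards are i's;
   [V_step] is one step of the deal, whose next card is an i with probability
   r / Rr. *)
Variables (f : seq 'I_n -> bool -> R) (V : nat -> nat -> R) (r0 L0 : nat).
Hypothesis V00 : 1 <= V 0 0.
Hypothesis V_step : forall pre r Rr, (0 < Rr)%N -> (r <= Rr)%N ->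
  (r + count_mem i pre = r0)%N -> (Rr + size pre = L0)%N ->
  r%:R / Rr%:R * expR (f pre true) * V r.-1 Rr.-1
    + (1 - r%:R / Rr%:R) * expR (f pre false) * V r Rr.-1 <= V r Rr.

Lemma sum_arrangements_expR_le L cnt pre : (\sum_j cnt j)%N = L ->
  (cnt i + count_mem i pre = r0)%N -> (L + size pre = L0)%N ->
  \sum_(w in arrangements L cnt) expR (sum_along f pre w)
    <= V (cnt i) L * #|arrangements L cnt|%:R.
Proof.
elim: L cnt pre => [|L IH] cnt pre sum_cnt r_pre L_pre.
  have cnt0 j : cnt j = 0%N by apply/eqP; rewrite -leqn0 -sum_cnt (bigD1 j) ?leq_addr.
  rewrite cnt0 (eq_bigr (fun _ => 1)) => [|w _]; last by rewrite tuple0 /sum_along big_ord0 expR0.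
  by rewrite sumr_const ler_peMl.
set D := #|arrangements L.+1 cnt|; set r := cnt i.
have L1_neq0 : (L.+1%:R : R) != 0 by rewrite pnatr_eq0.
pose W c := expR (f pre (c == i)) * V (cnt_del cnt c i) L.
have sum_c c : (0 < cnt c)%N ->
    \sum_(w in arrangements L (cnt_del cnt c)) expR (sum_along f pre (c :: w))
    <= (cnt c)%:R * D%:R / L.+1%:R * W c.
  move=> cnt_c; under eq_bigr do rewrite sum_along_cons expRD.
  rewrite -mulr_sumr mulrCA ler_wpM2l ?expR_ge0 //.
  have -> : (cnt c)%:R * D%:R / L.+1%:R = #|arrangements L (cnt_del cnt c)|%:R :> R.
    by rewrite -natrM -card_arrangements_del // natrM mulfK.
  rewrite mulrC; apply: IH; rewrite ?sum_cnt_del ?sum_cnt ?size_rcons ?addnS //.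
  rewrite -cats1 count_cat /= addn0 -r_pre /cnt_del.
  by case: eqP => [<-|_] /=; lia.
rewrite big_arrangements_cons (le_trans (ler_sum _ sum_c)) //.
rewrite big_mkcond /= (eq_bigr (fun c => (cnt c)%:R * D%:R / L.+1%:R * W c)) => [|c _]; last first.
  by case: posnP => [->|//]; rewrite !mul0r.
have r_le : (r <= L.+1)%N by rewrite -sum_cnt (bigD1 i) ?leq_addr.
have sum_other : (\sum_(c | c != i) cnt c = L.+1 - r)%N.
  by rewrite -sum_cnt [in RHS](bigD1 i) //= addKn.
rewrite (bigD1 i) //= (eq_bigr (fun c => (cnt c)%:R * (D%:R / L.+1%:R *
  (expR (f pre false) * V r L)))) => [|c c_i]; last first.
  by rewrite /W (cnt_del_neq _ c_i) (negbTE c_i) !mulrA.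
rewrite -mulr_suml -natr_sum sum_other /W /cnt_del eqxx subn1 natrB //.
have := V_step (ltn0Sn L) r_le r_pre L_pre.
move=> /(ler_wpM2r (ler0n _ D)); apply: le_trans; rewrite le_eqVlt; apply/orP; left.
by apply/eqP; field; rewrite nat1r.
Qed.

End ExponentialMoments.

Section DeckProbability.
Variables (R : realType) (m n : nat).
Local Notation word := ((m * n).-tuple 'I_n).
Implicit Types P Q : pred word.

Lemma prob_deckE P :
  prob_deck R P = (\sum_(w in deck m n) (P w)%:R) / #|deck m n|%:R.
Proof.
rewrite /prob_deck -sum1_card natr_sum big_mkcond [in RHS]big_mkcond /=.
by congr (_ / _); apply: eq_bigr => w _; rewrite inE; case: (w \in _); case: (P w).
Qed.

Lemma prob_deck_le P Q : (forall w, w \in deck m n -> P w -> Q w) ->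
  prob_deck R P <= prob_deck R Q.
Proof.
move=> PQ; rewrite !prob_deckE ler_wpM2r ?invr_ge0 ?ler0n //.
by apply: ler_sum => w /PQ; rewrite ler_nat; case: (P w) => [->|].
Qed.

Lemma prob_deckU P Q :
  prob_deck R (fun w => P w || Q w) <= prob_deck R P + prob_deck R Q.
Proof.
rewrite !prob_deckE -mulrDl -big_split ler_wpM2r ?invr_ge0 ?ler0n //=.
by apply: ler_sum => w _; rewrite -natrD ler_nat; case: (P w); case: (Q w).
Qed.

Lemma prob_deck_bigU (I : Type) (r : seq I) (Q : I -> pred word) :
  prob_deck R (fun w => has (Q^~ w) r) <= \sum_(j <- r) prob_deck R (Q j).
Proof.
elim: r => [|j r IH]; first by rewrite big_nil prob_deckE big1 ?mul0r.
rewrite big_cons; apply: le_trans (prob_deckU (Q j) (fun w => has (Q^~ w) r)) _.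
by rewrite lerD2l.
Qed.

Lemma prob_deck_expR_le (F : word -> R) (a V : R) : 0 <= V ->
  \sum_(w in deck m n) expR (F w) <= V * #|deck m n|%:R ->
  prob_deck R (fun w => a <= F w) <= expR (- a) * V.
Proof.
move=> V_ge0 sum_le; rewrite prob_deckE.
have [->|deck_gt0] := posnP #|deck m n|; first by rewrite invr0 mulr0 mulr_ge0 ?expR_ge0.
rewrite ler_pdivrMr ?ltr0n // -mulrA.
apply: le_trans (ler_wpM2l (expR_ge0 _) sum_le); rewrite mulr_sumr.
apply: ler_sum => w _; rewrite -expRD.
case: (lerP a (F w)) => [aF|_]; last exact: expR_ge0.
by apply: le_trans (expR_ge1Dx _); rewrite lerDl addrC subr_ge0.
Qed.

End DeckProbability.

Section WindowPotential.
Variable R : realType.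

(* A bound for E[x ^ X], X the number of the r undealt i's that fall among the
   last L of the Rr undealt cards: each of them does so with probability
   min(1, L / Rr), and sampling without replacement only helps. *)
Definition window_potential (L : nat) (x : R) (r Rr : nat) : R :=
  (1 + (if (Rr <= L)%N then 1 else L%:R / Rr%:R) * (x - 1)) ^+ r.

Lemma window_potential_ge0 L x r Rr : 1 <= x -> 0 <= window_potential L x r Rr.
Proof.
move=> x_ge1; rewrite exprn_ge0 // addr_ge0 // mulr_ge0 ?subr_ge0 //.
by case: ifP => _; rewrite ?divr_ge0 ?ler0n.
Qed.

Lemma window_potential_step L x r Rr : (0 < L)%N -> 1 <= x -> (L < Rr)%N -> (r <= Rr)%N ->
  r%:R / Rr%:R * window_potential L x r.-1 Rr.-1
    + (1 - r%:R / Rr%:R) * window_potential L x r Rr.-1 <= window_potential L x r Rr.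
Proof.
case: Rr => // k L_gt0 x_ge1 L_lt_k r_le_k; rewrite /window_potential /=.
rewrite [(k.+1 <= L)%N]leqNgt L_lt_k.
have k_gt0 : (0 < k)%N by apply: leq_trans L_gt0 L_lt_k.
have -> : (if (k <= L)%N then 1 else L%:R / k%:R) = L%:R / k%:R :> R.
  case: ifP => // k_le_L; have -> : k = L by apply/eqP; rewrite eqn_leq k_le_L.
  by rewrite divff // pnatr_eq0 -lt0n.
set v := L%:R / k%:R * (x - 1); set d := v / k.+1%:R.
have v_ge0 : 0 <= v by rewrite mulr_ge0 ?divr_ge0 ?ler0n ?subr_ge0.
have d_ge0 : 0 <= d by rewrite divr_ge0 ?ler0n.
have -> : 1 + L%:R / k.+1%:R * (x - 1) = 1 + v - d.
  by rewrite /d /v; field; rewrite nat1r !pnatr_eq0 -!lt0n k_gt0.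
case: r r_le_k => [|r] r_le_k; first by rewrite !expr0 !mul0r subr0 mulr1 add0r.
have d_le : d <= 1 + v.
  apply: (@le_trans _ _ v); last by rewrite lerDr.
  by rewrite ler_pdivrMr ?ltr0Sn // ler_peMr // ler1n.
apply: le_trans (exprB_ge r d_ge0 d_le); rewrite le_eqVlt; apply/orP; left.
by apply/eqP; rewrite /= exprS /d; field; rewrite -mulrS.
Qed.

Lemma window_potential_le l x m n : 1 <= x -> (0 < n)%N ->
  window_potential (l * n) x m (m * n) <= expR ((x - 1) * l%:R).
Proof.
move=> x_ge1 n_gt0; rewrite /window_potential leq_pmul2r //.
have x1_ge0 : 0 <= x - 1 by rewrite subr_ge0.
have pow_le (y : R) : 0 <= y -> (1 + y) ^+ m <= expR (y * m%:R).
  by move=> y_ge0; rewrite expRM_natr lerXn2r ?nnegrE ?expR_ge0 ?expR_ge1Dx //; lra.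
case: ifP => [m_le_l|/negbT]; last rewrite -ltnNge => l_lt_m.
  rewrite mul1r; apply: le_trans (pow_le _ x1_ge0) _.
  by rewrite ler_expR ler_wpM2l // ler_nat.
apply: le_trans (pow_le _ _) _; first by rewrite mulr_ge0 ?divr_ge0 ?ler0n.
rewrite ler_expR !natrM.
have m_gt0 : (0 < m)%N by apply: leq_ltn_trans l_lt_m.
suff -> : l%:R * n%:R / (m%:R * n%:R) * (x - 1) * m%:R = (x - 1) * l%:R by [].
by field; rewrite !pnatr_eq0 -!lt0n m_gt0 n_gt0.
Qed.

End WindowPotential.

Section TailMoments.
Variables (R : realType) (m n : nat) (i : 'I_n).
Local Notation word := ((m * n).-tuple 'I_n).
Local Notation sum_along := (sum_along i).

Definition next_prob (pre : seq 'I_n) : R :=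
  (m - count_mem i pre)%:R / (m * n - size pre)%:R.

Lemma next_probE pre r Rr :
  (r + count_mem i pre = m)%N -> (Rr + size pre = m * n)%N ->
  next_prob pre = r%:R / Rr%:R.
Proof. by rewrite /next_prob => <- <-; rewrite !addnK. Qed.

Lemma next_prob_ge0 pre : 0 <= next_prob pre.
Proof. by rewrite divr_ge0 ?ler0n. Qed.

Lemma sum_deck_expR_le (f : seq 'I_n -> bool -> R) (V : nat -> nat -> R) :
  1 <= V 0%N 0%N ->
  (forall pre r Rr, (0 < Rr)%N -> (r <= Rr)%N ->
     (r + count_mem i pre = m)%N -> (Rr + size pre = m * n)%N ->
     r%:R / Rr%:R * expR (f pre true) * V r.-1 Rr.-1
       + (1 - r%:R / Rr%:R) * expR (f pre false) * V r Rr.-1 <= V r Rr) ->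
  \sum_(w in deck m n) expR (sum_along f [::] w) <= V m (m * n)%N * #|deck m n|%:R.
Proof.
move=> V00 V_step.
apply: (@sum_arrangements_expR_le R n i f V m (m * n) V00 V_step (m * n) (fun _ => m) [::]).
- by rewrite sum_nat_const card_ord mulnC.
- by rewrite addn0.
- by rewrite addn0.
Qed.

(* The exponent theta N - (e^theta - 1) A of the compensated exponential
   supermartingale of the hits N of the selection [s]. *)
Definition compensated (th : R) (s : seq 'I_n -> bool) pre b : R :=
  th * (s pre && b)%:R - (expR th - 1) * ((s pre)%:R * next_prob pre).

Lemma sum_deck_expR_compensated th s :
  \sum_(w in deck m n) expR (sum_along (compensated th s) [::] w)
    <= 1 * #|deck m n|%:R.
Proof.
apply: (sum_deck_expR_le (V := fun _ _ => 1)) => // pre r Rr _ _ r_pre Rr_pre.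
rewrite -(next_probE r_pre Rr_pre) /compensated !mulr1; set p := next_prob pre.
case: (s pre) => /=; last first.
  by rewrite !mulr0n !mul0r !mulr0 subr0 expR0 !mulr1 addrC subrK.
rewrite mulr1 mulr0 mul1r sub0r expRD mulrA -mulrDl.
have -> : p * expR th + (1 - p) = 1 + (expR th - 1) * p by ring.
exact: mul1D_expRN_le1.
Qed.

Lemma sum_deck_expR_window (L : nat) (x : R) (g : seq 'I_n -> bool -> R) :
  (0 < L)%N -> 1 <= x ->
  (forall pre, next_prob pre * expR (g pre true) / x
                 + (1 - next_prob pre) * expR (g pre false) <= 1) ->
  \sum_(w in deck m n) expR (sum_along (fun p b => (m * n - L <= size p)%N%:R * g p b) [::] w)
    <= window_potential L x m (m * n) * #|deck m n|%:R.
Proof.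
move=> L_gt0 x_ge1 g_step; apply: sum_deck_expR_le; first by rewrite /window_potential expr0.
move=> pre r Rr Rr_gt0 r_le r_pre Rr_pre.
have -> : (m * n - L <= size pre)%N = (Rr <= L)%N by rewrite -Rr_pre; apply/idP/idP; lia.
case: (leqP Rr L) => [Rr_le|L_lt]; last first.
  by rewrite !mul0r expR0 !mulr1; apply: window_potential_step.
have := g_step pre; rewrite (next_probE r_pre Rr_pre) !mul1r => step.
rewrite /window_potential Rr_le (leq_trans (leq_pred _) Rr_le) !mul1r subrKC.
case: r r_le r_pre step => [|r] _ _ step.
  by move: step; rewrite !mul0r subr0 !add0r !mul1r !expr0 mulr1.
have x_gt0 : 0 < x by apply: lt_le_trans x_ge1.
have xr_ge0 : 0 <= x ^+ r.+1 by rewrite exprn_ge0 ?ltW.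
rewrite -[X in _ <= X]mul1r; apply: le_trans (ler_wpM2r xr_ge0 step).
rewrite le_eqVlt; apply/orP; left; apply/eqP; rewrite /= exprS; field.
by rewrite pnatr_eq0 -lt0n Rr_gt0 gt_eqF.
Qed.

Lemma prob_compensated_le th s a :
  prob_deck R (fun w : word => a <= sum_along (compensated th s) [::] w) <= expR (- a).
Proof.
rewrite -[X in _ <= X]mulr1; apply: prob_deck_expR_le => //.
exact: sum_deck_expR_compensated.
Qed.

Lemma prob_window_next_prob_le k a : (0 < k)%N -> (0 < n)%N ->
  prob_deck R (fun w : word => a <= sum_along
      (fun p _ => (m * n - k * n <= size p)%N%:R * (next_prob p / 2)) [::] w)
    <= expR (- a) * expR k%:R.
Proof.
move=> k_gt0 n_gt0; have two_ge1 : 1 <= 2 :> R by lra.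
apply: le_trans (prob_deck_expR_le _ (window_potential_ge0 _ _ _ two_ge1) _) _.
  apply: sum_deck_expR_window; rewrite ?muln_gt0 ?k_gt0 // => pre.
  set p := next_prob pre; have := mul1D_expRN_le1 (- (p / 2)).
  by rewrite opprK; apply: le_trans; rewrite le_eqVlt; apply/orP; left; apply/eqP; field.
rewrite ler_pM2l ?expR_gt0 //; apply: le_trans (window_potential_le _ _ _ _) _ => //.
by rewrite ler_expR; lra.
Qed.

Lemma prob_tail_count_le k th a : (0 < k)%N -> (0 < n)%N -> 0 <= th ->
  prob_deck R (fun w : word => a <= th * (count_mem i (drop (m * n - k * n) w))%:R)
    <= expR (- a) * expR ((expR th - 1) * k%:R).
Proof.
move=> k_gt0 n_gt0 th_ge0; have x_ge1 : 1 <= expR th.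
  by apply: le_trans (expR_ge1Dx _); rewrite lerDl.
pose g (p : seq 'I_n) b := (m * n - k * n <= size p)%N%:R * (th * b%:R).
apply: (@le_trans _ _ (prob_deck R (fun w : word => a <= sum_along g [::] w))).
  apply: prob_deck_le => w _.
  have -> : sum_along g [::] w = th * sum_along
      (fun p b => (m * n - k * n <= size p)%N%:R * b%:R) [::] w.
    by rewrite /sum_along mulr_sumr; apply: eq_bigr => t _; rewrite mulrCA.
  by rewrite sum_along_window_count subn0.
apply: le_trans (prob_deck_expR_le _ (window_potential_ge0 _ _ _ x_ge1) _) _.
  apply: sum_deck_expR_window => [||pre]; rewrite ?muln_gt0 ?k_gt0 //.
  by rewrite /= mulr1 mulr0 expR0 mulr1 mulfK ?gt_eqF ?expR_gt0 // subrKC.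
by rewrite ler_pM2l ?expR_gt0 ?window_potential_le.
Qed.

End TailMoments.

Lemma compensated_gap (R : realType) (eps Y S beta Z e2 : R) :
  0 < eps -> eps <= 1 / 4 -> 0 <= beta -> 0 <= e2 ->
  (1 + 4 * eps) * beta + e2 < Y -> S <= (1 + 2 * eps) * beta + Z -> Z < e2 / 4 ->
  eps * e2 / 4 <= eps / 2 * Y - (expR (eps / 2) - 1) * S.
Proof.
move=> eps_gt0 eps_le beta_ge0 e2_ge0 Y_gt S_le Z_lt.
have c_ge0 : 0 <= expR (eps / 2) - 1.
  by rewrite subr_ge0; apply: le_trans (expR_ge1Dx _); lra.
have c_le : expR (eps / 2) - 1 <= eps / 2 * (1 + eps) by apply: expR_half_sub1_le; lra.
have B_ge0 : 0 <= (1 + 2 * eps) * beta + e2 / 4.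
  by rewrite addr_ge0 ?divr_ge0 // mulr_ge0 //; lra.
have cS_le : (expR (eps / 2) - 1) * S
    <= eps / 2 * (1 + eps) * ((1 + 2 * eps) * beta + e2 / 4).
  by apply: le_trans (ler_wpM2r B_ge0 c_le); rewrite ler_wpM2l //; lra.
have epsY : eps / 2 * ((1 + 4 * eps) * beta + e2) <= eps / 2 * Y.
  by rewrite ler_wpM2l; lra.
have gap1 : 0 <= eps / 2 * beta * (eps - 2 * eps ^+ 2) by rewrite !mulr_ge0 //; nra.
have gap2 : 0 <= eps / 2 * e2 * (1 - eps) by rewrite !mulr_ge0 //; lra.
lra.
Qed.

Section Deviation.
Variables (R : realType) (m n : nat) (i : 'I_n).
Local Notation sum_along := (sum_along i).
Local Notation next_prob := (next_prob R m i).
Local Notation compensated := (@compensated R m n i).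

Definition n_selected (s : seq 'I_n -> bool) (w : seq 'I_n) : R :=
  sum_along (fun p _ => (s p)%:R) [::] w.

Definition n_hits (s : seq 'I_n -> bool) (w : seq 'I_n) : R :=
  sum_along (fun p b => (s p && b)%:R) [::] w.

Lemma next_prob_tail_le (lam : R) (K t : nat) (w : seq 'I_n) :
  (0 < n)%N -> 0 <= lam -> size w = (m * n)%N -> count_mem i w = m ->
  (forall k, (K <= k < m)%N ->
     (count_mem i (drop (m * n - k.+1 * n) w))%:R <= lam * k%:R) ->
  (K * n < m * n - t)%N -> next_prob (take t w) <= lam / n%:R.
Proof.
move=> n_gt0 lam_ge0 size_w count_w tail_le Kn_lt.
have t_lt : (t < m * n)%N by lia.
rewrite /next_prob size_take size_w t_lt.
have -> : (m - count_mem i (take t w) = count_mem i (drop t w))%N.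
  by rewrite -{1}count_w -{1}(cat_take_drop t w) count_cat addKn.
set Rt := (m * n - t)%N; set k := (Rt.-1 %/ n)%N.
have kn_le : (k * n <= Rt.-1)%N by apply: leq_trunc_div.
have kn_gt : (Rt.-1 < k.+1 * n)%N by apply: ltn_ceil.
have k_tail : (K <= k < m)%N by rewrite leq_divRL // ltn_divLR //; lia.
have drop_le : (count_mem i (drop t w) <= count_mem i (drop (m * n - k.+1 * n) w))%N.
  rewrite -(subnK (_ : m * n - k.+1 * n <= t)%N) -?drop_drop; last by lia.
  set s := drop _ w; rewrite -[X in (_ <= count _ X)%N](cat_take_drop (t - (m * n - k.+1 * n))).
  by rewrite count_cat leq_addl.
have Rt_gt0 : (0 : R) < Rt%:R by rewrite ltr0n /Rt; lia.
rewrite ler_pdivrMr // mulrAC ler_pdivlMr ?ltr0n //.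
apply: le_trans (_ : lam * k%:R * n%:R <= _).
  by rewrite ler_wpM2r ?ler0n // (le_trans _ (tail_le k k_tail)) // ler_nat.
by rewrite -mulrA ler_wpM2l // -natrM ler_nat; lia.
Qed.

Lemma compensator_le (lam : R) K (s : seq 'I_n -> bool) w :
  (0 < n)%N -> 0 <= lam -> size w = (m * n)%N -> count_mem i w = m ->
  (forall k, (K <= k < m)%N ->
     (count_mem i (drop (m * n - k.+1 * n) w))%:R <= lam * k%:R) ->
  sum_along (fun p _ => (s p)%:R * next_prob p) [::] w
    <= lam / n%:R * n_selected s w
       + sum_along (fun p _ => (m * n - K * n <= size p)%N%:R * next_prob p) [::] w.
Proof.
move=> n_gt0 lam_ge0 size_w count_w tail_le.
rewrite /n_selected -sum_alongZ /sum_along -big_split /=; apply: ler_sum => -[t /= t_lt] _.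
have p_ge0 := next_prob_ge0 R m i (take t w).
rewrite size_take t_lt; case: leqP => [t_win|t_out].
  rewrite mul1r; case: (s _); rewrite ?mulr1 ?mul1r ?mul0r ?mulr0 ?add0r //.
  by rewrite lerDr mulr_ge0 ?divr_ge0 ?ler0n.
rewrite mul0r addr0 mulrC ler_wpM2r ?ler0n //.
by apply: (next_prob_tail_le n_gt0 lam_ge0 size_w count_w tail_le); lia.
Qed.

Lemma deviation_cover (eps : R) K s w :
  0 < eps -> eps <= 1 / 4 -> (0 < n)%N -> size w = (m * n)%N -> count_mem i w = m ->
  (1 + 4 * eps) * n_selected s w / n%:R + eps ^+ 2 * m%:R < n_hits s w ->
  [\/ eps ^+ 3 * m%:R / 4 <= sum_along (compensated (eps / 2) s) [::] w,
      eps ^+ 2 * m%:R / 8 <= sum_along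
        (fun p _ => (m * n - K * n <= size p)%N%:R * (next_prob p / 2)) [::] w
    | exists2 k, (K <= k < m)%N & eps / 2 * ((1 + 2 * eps) * k%:R)
        <= eps / 2 * (count_mem i (drop (m * n - k.+1 * n) w))%:R].
Proof.
move=> eps_gt0 eps_le n_gt0 size_w count_w large_hits.
case: (boolP [exists k : 'I_m, (K <= k)%N &&
    ((1 + 2 * eps) * k%:R < (count_mem i (drop (m * n - k.+1 * n) w))%:R)]).
  case/existsP => k /andP[K_le k_bad]; apply: Or33; exists (val k).
    by rewrite K_le ltn_ord.
  by rewrite ler_wpM2l ?ltW // divr_gt0.
move/existsPn => no_bad.
have tail_le k : (K <= k < m)%N ->
    (count_mem i (drop (m * n - k.+1 * n) w))%:R <= (1 + 2 * eps) * k%:R.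
  by case/andP=> K_le k_lt; have := no_bad (Ordinal k_lt); rewrite /= K_le -leNgt.
have lam_ge0 : 0 <= 1 + 2 * eps by lra.
have S_le := compensator_le s n_gt0 lam_ge0 size_w count_w tail_le.
set S := sum_along _ _ _ in S_le; set Z := sum_along _ _ _ in S_le.
have -> : sum_along (fun p _ => (m * n - K * n <= size p)%N%:R * (next_prob p / 2)) [::] w
    = Z / 2 by rewrite /Z /sum_along mulr_suml; apply: eq_bigr => t _; rewrite mulrA.
case: (lerP (eps ^+ 2 * m%:R / 8) (Z / 2)) => [|Z_lt]; first by move=> ?; apply: Or32.
apply: Or31; rewrite /compensated sum_alongB !sum_alongZ -/(n_hits s w) -/S.
rewrite -mulrA in large_hits; rewrite mulrAC -mulrA in S_le.
have e2_ge0 : 0 <= eps ^+ 2 * m%:R by rewrite mulr_ge0 ?exprn_ge0 ?(ltW eps_gt0).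
have beta_ge0 : 0 <= n_selected s w / n%:R.
  by rewrite divr_ge0 ?ler0n // sumr_ge0 // => t _; rewrite ler0n.
rewrite exprS -[eps * _ * m%:R]mulrA.
by apply: (compensated_gap (beta := n_selected s w / n%:R) (Z := Z)) => //; lra.
Qed.

End Deviation.

Lemma tail_term_le (R : realType) (eps : R) (m K k : nat) :
  0 < eps -> eps <= 1 / 4 -> eps ^+ 2 * m%:R / 16 < K%:R -> (K <= k)%N ->
  expR (- (eps / 2 * ((1 + 2 * eps) * k%:R))) * expR ((expR (eps / 2) - 1) * k.+1%:R)
    <= expR 1 * expR (- (eps ^+ 4 * m%:R / 32)).
Proof.
move=> eps_gt0 eps_le K_gt k_ge; rewrite -!expRD ler_expR.
have c_le : expR (eps / 2) - 1 <= eps / 2 * (1 + eps) by apply: expR_half_sub1_le; lra.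
have k_ge' : K%:R <= k%:R :> R by rewrite ler_nat.
have e_sq : eps * eps <= 1 / 16 by nra.
have sq_ge0 : 0 <= eps ^+ 2 / 2 by rewrite divr_ge0 ?exprn_ge0 ?(ltW eps_gt0).
have := ler_wpM2l sq_ge0 k_ge'; have := ler_wpM2l sq_ge0 (ltW K_gt).
have := ler_wpM2r (ler0n _ k.+1) c_le; rewrite -[k.+1%:R]natr1; nra.
Qed.

Lemma deviation_terms_le (R : realType) (eps : R) (m K : nat) :
  0 < eps -> eps <= 1 / 4 -> K%:R <= eps ^+ 2 * m%:R / 16 + 1 ->
  expR (- (eps ^+ 3 * m%:R / 4))
    + (expR (- (eps ^+ 2 * m%:R / 8)) * expR K%:R
       + \sum_(K <= k < m) expR 1 * expR (- (eps ^+ 4 * m%:R / 32)))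
  <= 192 * expR 1 / eps ^+ 4 * expR (- (eps ^+ 4 * m%:R / 64)).
Proof.
move=> eps_gt0 eps_le K_le; set X := expR (- (eps ^+ 4 * m%:R / 64)).
have e_ge1 : 1 <= expR 1 :> R by apply: le_trans (expR_ge1Dx 1); lra.
have e4_gt0 : 0 < eps ^+ 4 by rewrite exprn_gt0.
have e4_le1 : eps ^+ 4 <= 1 by rewrite exprn_ile1 ?ltW //; lra.
have m_ge0 : 0 <= m%:R :> R by rewrite ler0n.
set M := 64 * expR 1 / eps ^+ 4.
have eM : expR 1 <= M by rewrite ler_pdivlMr // mulrC ler_wpM2r ?expR_ge0 //; lra.
have X_ge0 : 0 <= X := expR_ge0 _.
have T1 : expR (- (eps ^+ 3 * m%:R / 4)) <= M * X.
  apply: (@le_trans _ _ X); last by apply: ler_peMl => //; lra.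
  have e3m_ge0 : 0 <= eps ^+ 3 * m%:R by rewrite mulr_ge0 ?exprn_ge0 ?(ltW eps_gt0).
  by rewrite ler_expR lerN2 exprS; nra.
have T2 : expR (- (eps ^+ 2 * m%:R / 8)) * expR K%:R <= M * X.
  apply: (@le_trans _ _ (expR 1 * X)); last by rewrite ler_wpM2r.
  rewrite -!expRD ler_expR.
  have e2m_ge0 : 0 <= eps ^+ 2 * m%:R by rewrite mulr_ge0 ?exprn_ge0 ?(ltW eps_gt0).
  have : 0 <= eps ^+ 2 * m%:R * (1 - eps ^+ 2) by rewrite mulr_ge0 //; nra.
  rewrite (exprD _ 2 2); nra.
have T3 : \sum_(K <= k < m) expR 1 * expR (- (eps ^+ 4 * m%:R / 32)) <= M * X.
  rewrite sumr_const_nat -[_ *+ (m - K)]mulr_natl.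
  apply: (@le_trans _ _ (m%:R * (expR 1 * expR (- (eps ^+ 4 / 32 * m%:R))))).
    by rewrite [_ / 32 * _]mulrAC ler_wpM2r ?mulr_ge0 ?expR_ge0 // ler_nat leq_subr.
  have -> : M * X = expR 1 * (2 / (eps ^+ 4 / 32) * X) by rewrite /M; field; rewrite gt_eqF.
  rewrite mulrCA ler_pM2l ?expR_gt0 //.
  apply: le_trans (mul_expRN_le _ _) _; first by rewrite divr_gt0.
  by rewrite le_eqVlt; apply/orP; left; apply/eqP; congr (_ * expR _); field.
have -> : 192 * expR 1 / eps ^+ 4 * X = 3 * (M * X) by rewrite /M; ring.
lra.
Qed.

Theorem prob_hits_deviation_le (R : realType) (eps : R) m n (i : 'I_n)
    (s : seq 'I_n -> bool) :
  0 < eps -> eps <= 1 / 4 ->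
  prob_deck R (fun w : (m * n).-tuple 'I_n =>
    (1 + 4 * eps) * n_selected R i s w / n%:R + eps ^+ 2 * m%:R < n_hits R i s w)
  <= 192 * expR 1 / eps ^+ 4 * expR (- (eps ^+ 4 * m%:R / 64)).
Proof.
move=> eps_gt0 eps_le; have n_gt0 : (0 < n)%N by case: n i s => [[]|].
set K := (Num.trunc (eps ^+ 2 * m%:R / 16)).+1.
have K_gt : eps ^+ 2 * m%:R / 16 < K%:R by apply: truncnS_gt.
have K_le : K%:R <= eps ^+ 2 * m%:R / 16 + 1.
  have e2m_ge0 : 0 <= eps ^+ 2 * m%:R by rewrite mulr_ge0 ?exprn_ge0 ?(ltW eps_gt0).
  by rewrite -[K%:R]natr1 lerD2r truncn_le divr_ge0.
pose E1 (w : seq 'I_n) := eps ^+ 3 * m%:R / 4 <= sum_along i (compensated m i (eps / 2) s) [::] w.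
pose E2 (w : seq 'I_n) := eps ^+ 2 * m%:R / 8 <= sum_along i
  (fun p _ => (m * n - K * n <= size p)%N%:R * (next_prob R m i p / 2)) [::] w.
pose E3 k (w : seq 'I_n) := eps / 2 * ((1 + 2 * eps) * k%:R)
  <= eps / 2 * (count_mem i (drop (m * n - k.+1 * n) w))%:R.
apply: (@le_trans _ _ (prob_deck R (fun w : (m * n).-tuple 'I_n =>
  E1 w || (E2 w || has (E3^~ w) (index_iota K m))))).
  apply: prob_deck_le => w w_deck large.
  have count_w : count_mem i w = m by move: w_deck; rewrite inE => /forallP /(_ i) /eqP.
  have [E|E|[k k_range E]] := deviation_cover K eps_gt0 eps_le n_gt0 (size_tuple w) count_w large.
  - by rewrite /E1 E.
  - by rewrite /E2 E orbT.
  - by apply/orP; right; apply/orP; right; apply/hasP; exists k; rewrite ?mem_index_iota.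
apply: le_trans (deviation_terms_le eps_gt0 eps_le K_le).
apply: le_trans (prob_deckU R _ _) _; apply: lerD; first exact: prob_compensated_le.
apply: le_trans (prob_deckU R _ _) _; apply: lerD; first exact: prob_window_next_prob_le.
apply: le_trans (prob_deck_bigU R _ _) _; apply: ler_sum_nat => k /andP[K_le_k _].
apply: le_trans (prob_tail_count_le m i _ _ n_gt0 _) _ => //; first by lra.
exact: tail_term_le eps_gt0 eps_le K_gt K_le_k.
Qed.

Section History.
Variables (T : eqType) (strat : strategy T).

Lemma size_play_aux h w : size (play_aux strat h w) = (size h + size w)%N.
Proof. by elim: w h => [|c w IH] h /=; rewrite ?addn0 // IH size_rcons addSnnS. Qed.

Lemma size_history w : size (history strat w) = size w.
Proof. exact: size_play_aux. Qed.

Lemma play_aux_cat h w1 w2 :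
  play_aux strat h (w1 ++ w2) = play_aux strat (play_aux strat h w1) w2.
Proof. by elim: w1 h => [|c w1 IH] h /=. Qed.

Lemma take_play_aux h w : take (size h) (play_aux strat h w) = h.
Proof.
elim: w h => [|c w IH] h /=; first exact: take_size.
by rewrite -(take_takel _ (leqnSn _)) -(size_rcons h (strat h, strat h == c)) IH -cats1 take_size_cat.
Qed.

Lemma history_take t w : take t (history strat w) = history strat (take t w).
Proof.
rewrite -{1}(cat_take_drop t w) /history play_aux_cat.
have [t_le|t_gt] := leqP t (size w).
  by rewrite -{1}(size_takel t_le) -(size_history (take t w)) take_play_aux.
rewrite drop_oversize ?(ltnW t_gt) //= take_oversize //.
by rewrite size_play_aux size_take geq_minl.
Qed.

Lemma history_rcons w c : history strat (rcons w c) =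
  rcons (history strat w) (strat (history strat w), strat (history strat w) == c).
Proof. by rewrite /history -cats1 play_aux_cat. Qed.

Lemma nth_history x0 c0 t w : (t < size w)%N ->
  nth x0 (history strat w) t = (strat (history strat (take t w)),
                                strat (history strat (take t w)) == nth c0 w t).
Proof.
move=> t_lt; rewrite -(nth_take x0 (ltnSn t)) history_take (take_nth c0 t_lt).
by rewrite history_rcons nth_rcons size_history size_take t_lt ltnn eqxx.
Qed.

End History.

Lemma count_zip_iota (T : Type) (P : pred (nat * T)) x0 (s : seq T) :
  count P (zip (iota 0 (size s)) s) = (\sum_(t < size s) P (val t, nth x0 s t))%N.
Proof.
suff gen k : count P (zip (iota k (size s)) s)
    = (\sum_(t < size s) P (k + t, nth x0 s t))%N by rewrite gen.
elim: s k => [|c s IH] k /=; first by rewrite big_ord0.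
by rewrite big_ord_recl IH addn0; congr (_ + _)%N; apply: eq_bigr => t _; rewrite addnS.
Qed.

Section CriticalGuesses.
Variables (R : realType) (eps : R) (m n : nat) (strat : strategy 'I_n) (i : 'I_n).

Definition critical_guess (pre : seq 'I_n) : bool :=
  (strat (history strat pre) == i) &&
  is_critical eps m n i (history strat pre) (size pre).

Lemma is_critical_history t w :
  is_critical eps m n i (history strat w) t
  = is_critical eps m n i (history strat (take t w)) (size (take t w)).
Proof.
by rewrite /is_critical history_take [take (size _) _]take_oversize ?size_history.
Qed.

Lemma Y_count_history w :
  (Y_count eps m n i (history strat w))%:R = n_hits R i critical_guess w.
Proof.
rewrite /Y_count (count_zip_iota _ (i, false)) natr_sum size_history.
apply: eq_bigr => -[t t_lt] _ /=.
rewrite (nth_history _ _ i) // is_critical_history //= /critical_guess.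
by case: eqP => [->|_] //=; rewrite eq_sym andbC.
Qed.

Lemma b_count_history w :
  (b_count eps m n i (history strat w))%:R = n_selected R i critical_guess w.
Proof.
rewrite /b_count (count_zip_iota _ (i, false)) natr_sum size_history.
apply: eq_bigr => -[t t_lt] _ /=.
by rewrite (nth_history _ _ i) // is_critical_history.
Qed.

End CriticalGuesses.

Theorem lemma3p12 (R : realType) (eps : R) :
  0 < eps -> eps <= 1 / 4 ->
  exists c c' : R, 0 < c /\ 0 < c' /\
  forall m : nat, (0 < m)%N ->
  exists N : nat, forall n : nat, (N <= n)%N ->
  forall (strat : strategy 'I_n) (i : 'I_n),
    @prob_deck R m n (fun w =>
      let H := history strat (val w) in
      (1 + 4 * eps) * (b_count eps m n i H)%:R / n%:R + eps ^+ 2 * m%:R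
        < (Y_count eps m n i H)%:R)
    <= c' * eps ^- 2 * expR (- (c * eps ^+ 4 * m%:R)).
Proof.
move=> eps_gt0 eps_le; exists (1 / 64), (192 * expR 1 / eps ^+ 2).
split; first lra; split; first by rewrite !divr_gt0 ?mulr_gt0 ?expR_gt0 ?exprn_gt0.
move=> m _; exists 0%N => n _ strat i.
have -> : 192 * expR 1 / eps ^+ 2 * eps ^- 2 * expR (- (1 / 64 * eps ^+ 4 * m%:R))
    = 192 * expR 1 / eps ^+ 4 * expR (- (eps ^+ 4 * m%:R / 64)).
  by congr (_ * expR _); field; rewrite ?gt_eqF.
apply: le_trans _ (prob_hits_deviation_le m i (critical_guess eps m strat i) eps_gt0 eps_le).
by apply: prob_deck_le => w _ /=; rewrite Y_count_history b_count_history.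
Qed.
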